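(* Let $N,n,T_h\in\mathbb{Z}_{>0}$, $\varepsilon>0$, for each $i\in\{1,\dots,N\}$ let $A_i,B_i\in\mathbb{R}^{n\times n}$ with $B_i$ invertible, and let $x_1^{\mathsf d},\dots,x_N^{\mathsf d}\in\mathbb{R}^n$. Consider the discrete-time system on $(x,\beta)\in\mathbb{R}^{nN}\times\mathbb{R}_{>0}^N$, \[ x(k+1)=f_1(x(k),\beta(k)),\qquad \beta(k+1)=f_2(x(k),\beta(k)), \] where, writing $x=[x_1;\dots;x_N]$, \[ \tilde P(x,\beta):=\big(\tfrac1N1_N\oslash[K(x)\beta]\big)^{\mathrm{diag}}K(x)\,\beta^{\mathrm{diag}}, \] $f_1(x,\beta)$ is the vector whose $i$-th block ($i=1,\dots,N$) is $\bar A_ix_i+(I_n-\bar A_i)\,N\sum_{j=1}^N\tilde P_{ij}(x,\beta)\,x_j^{\mathsf d}$, and \[ f_2(x,\beta):=\tfrac1N1_N\oslash\Big[K(f_1(x,\beta))^\top\big(\tfrac1N1_N\oslash[K(x)\beta]\big)\Big]. \] Then this system has at least one equilibrium point $(x^{\mathsf e},\beta^{\mathsf e})\in\mathbb{R}^{nN}\times(\mathbb{R}_{>0}^N/{\sim})$, i.e. a pair with $f_1(x^{\mathsf e},\beta^{\mathsf e})=x^{\mathsf e}$ and $f_2(x^{\mathsf e},\beta^{\mathsf e})\sim\beta^{\mathsf e}$.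
   Context: Notation: $v^{\mathrm{diag}}$ is the diagonal matrix with diagonal $v$; $\oslash$ is elementwise division of positive vectors; $1_N$ is the all-ones vector; for positive semidefinite $M$, $\|x\|_M=(x^\top Mx)^{1/2}$; for $\beta,\beta'\in\mathbb{R}_{>0}^N$, $\beta\sim\beta'$ iff $\beta=r\beta'$ for some $r>0$, and $\mathbb{R}_{>0}^N/{\sim}$ is the corresponding quotient (the map $f_1$ is invariant and $f_2$ is positively homogeneous in $\beta$, so the system is well defined on the quotient). Definitions: $G_{i,T_h}:=\sum_{k=0}^{T_h-1}A_i^kB_iB_i^\top(A_i^\top)^k$, $\mathcal{G}_i:=(A_i^{T_h})^\top G_{i,T_h}^{-1}A_i^{T_h}$, $\bar A_i:=A_i-B_iB_i^\top(A_i^\top)^{T_h-1}G_{i,T_h}^{-1}A_i^{T_h}$, and $K(x)\in\mathbb{R}_{>0}^{N\times N}$ has entries $K_{ij}(x)=\exp\!\big(-\|x_i-x_j^{\mathsf d}\|_{\mathcal{G}_i}^2/\varepsilon\big)$. This system is the closed loop of Sinkhorn MPC with energy cost and the barycentric target $x_{\rm tmp}^{\mathsf d,i}(P)=N\sum_jP_{ij}x_j^{\mathsf d}$. *)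

From HB Require Import structures.
From mathcomp Require Import all_boot all_order all_algebra.
From mathcomp Require Import all_classical all_reals all_analysis.
Set Implicit Arguments. Unset Strict Implicit. Unset Printing Implicit Defensive.
Import Order.TTheory GRing.Theory Num.Theory.
Local Open Scope ring_scope.

Section SinkhornMPC.
Variable R : realType.

Definition mxpow (m : nat) (M : 'M[R]_m) (k : nat) : 'M[R]_m :=
  iter k (mulmx M) 1%:M.

Definition gram (m Th : nat) (A B : 'M[R]_m) : 'M[R]_m :=
  \sum_(k < Th) (mxpow A k *m B *m B^T *m mxpow A^T k).

Definition calG (m Th : nat) (A B : 'M[R]_m) : 'M[R]_m :=
  (mxpow A Th)^T *m invmx (gram Th A B) *m mxpow A Th.

Definition Abar (m Th : nat) (A B : 'M[R]_m) : 'M[R]_m :=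
  A - B *m B^T *m mxpow A^T Th.-1 *m invmx (gram Th A B) *m mxpow A Th.

Definition qnorm2 (m : nat) (M : 'M[R]_m) (v : 'cV[R]_m) : R :=
  (v^T *m M *m v) 0 0.

Variables (N n Th : nat) (eps : R) (A B : 'I_N -> 'M[R]_n)
  (xd : 'I_N -> 'cV[R]_n).

Definition Kmat (x : 'I_N -> 'cV[R]_n) (i j : 'I_N) : R :=
  expR (- (qnorm2 (calG Th (A i) (B i)) (x i - xd j) / eps)).

Definition uvec (x : 'I_N -> 'cV[R]_n) (beta : 'I_N -> R) (i : 'I_N) : R :=
  (N%:R^-1) / (\sum_(j < N) Kmat x i j * beta j).

Definition Ptilde (x : 'I_N -> 'cV[R]_n) (beta : 'I_N -> R) (i j : 'I_N) : R :=
  uvec x beta i * Kmat x i j * beta j.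

Definition f1 (x : 'I_N -> 'cV[R]_n) (beta : 'I_N -> R) (i : 'I_N) : 'cV[R]_n :=
  Abar Th (A i) (B i) *m x i
  + (1%:M - Abar Th (A i) (B i)) *m
      (N%:R *: \sum_(j < N) (Ptilde x beta i j *: xd j)).

Definition f2 (x : 'I_N -> 'cV[R]_n) (beta : 'I_N -> R) (j : 'I_N) : R :=
  (N%:R^-1) / (\sum_(i < N) Kmat (f1 x beta) i j * uvec x beta i).

End SinkhornMPC.

From HB Require Import structures.
From mathcomp Require Import all_boot all_order all_algebra.
From mathcomp Require Import all_classical all_reals all_analysis.
From mathcomp Require Import ring lra.
Import Order.TTheory GRing.Theory Num.Theory.
Import numFieldNormedType.Exports.
Set Implicit Arguments. Unset Strict Implicit. Unset Printing Implicit Defensive.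
Local Open Scope ring_scope.

(* The equilibrium comes from a variational principle. Over the couplings P
   of two uniform marginals (P >= 0, all row and column sums 1/N) minimise
     Phi(P) = sum_ij P_ij |t_i(P) - xd_j|^2_{G_i} + eps sum_ij P_ij ln P_ij,
   where t_i(P) = N sum_j P_ij xd_j, a continuous function on a compact set.
   Because G_i is positive semidefinite and t_i(P) is the barycentre of the
   xd_j with weights P_i., replacing t(P) by any state x can only increase
   the transport cost; so a minimiser P is also an entropic optimal coupling
   for the fixed cost of x := t(P).  The entropy has infinite slope at 0,
   hence P > 0, and first-order optimality along the marginal-preserving
   perturbations of 2x2 cycles gives the Sinkhorn form
   P = diag(u) K(x) diag(beta).  Then Ptilde(x, beta) = P, so
   f1(x, beta) = t(P) = x, and the column sums of P give f2(x, beta) = beta. *)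

(** * Quadratic forms *)

Section QuadraticForm.
Variable R : realType.

Lemma mxpowSr m (M : 'M[R]_m) k : mxpow M k.+1 = mxpow M k *m M.
Proof.
rewrite /mxpow; elim: k => [|k IHk]; first by rewrite /= mulmx1 mul1mx.
by rewrite iterS {1}IHk mulmxA.
Qed.

Lemma mxpow_trmx m (M : 'M[R]_m) k : mxpow M^T k = (mxpow M k)^T.
Proof.
elim: k => [|k IHk]; first by rewrite /mxpow /= trmx1.
by rewrite mxpowSr trmx_mul -IHk.
Qed.

Lemma qnorm2E m (M : 'M[R]_m) v : qnorm2 M v = \sum_a \sum_b v a 0 * M a b * v b 0.
Proof.
rewrite /qnorm2 !mxE exchange_big; apply: eq_bigr => b _.
by rewrite !mxE mulr_suml; apply: eq_bigr => a _; rewrite !mxE.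
Qed.

Lemma bilin_trmx m (M : 'M[R]_m) (u v : 'cV[R]_m) :
  (v^T *m M *m u) 0 0 = (u^T *m M^T *m v) 0 0.
Proof.
have trE (X : 'M[R]_1) : X 0 0 = X^T 0 0 by rewrite mxE.
by rewrite [LHS]trE !trmx_mul trmxK mulmxA.
Qed.

Lemma qnorm2_trmx m (M : 'M[R]_m) v : qnorm2 M^T v = qnorm2 M v.
Proof. by rewrite /qnorm2 bilin_trmx trmxK. Qed.

Lemma qnorm2_congr m (M C : 'M[R]_m) v : qnorm2 (C^T *m M *m C) v = qnorm2 M (C *m v).
Proof. by rewrite /qnorm2 trmx_mul !mulmxA. Qed.

Lemma qnorm2_sum m (I : finType) (F : I -> 'M[R]_m) v :
  qnorm2 (\sum_i F i) v = \sum_i qnorm2 (F i) v.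
Proof. by rewrite /qnorm2 mulmx_sumr mulmx_suml summxE. Qed.

Lemma qnorm2_mul_tr_ge0 m (M : 'M[R]_m) v : 0 <= qnorm2 (M *m M^T) v.
Proof.
have -> : M *m M^T = M^T^T *m 1%:M *m M^T by rewrite trmxK mulmx1.
rewrite qnorm2_congr /qnorm2 mulmx1 !mxE; apply: sumr_ge0 => a _; rewrite !mxE -expr2.
exact: sqr_ge0.
Qed.

Lemma gram_qnorm2_ge0 m Th (M C : 'M[R]_m) v : 0 <= qnorm2 (gram Th M C) v.
Proof.
rewrite qnorm2_sum; apply: sumr_ge0 => k _.
by rewrite mxpow_trmx -mulmxA -trmx_mul qnorm2_mul_tr_ge0.
Qed.

(* [invmx M = M] for singular [M], so no invertibility is needed. *)
Lemma invmx_qnorm2_ge0 m (M : 'M[R]_m) : (forall v, 0 <= qnorm2 M v) ->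
  forall v, 0 <= qnorm2 (invmx M) v.
Proof.
move=> M_ge0 v; have [Mu|/invmx_out-> //] := boolP (M \in unitmx).
by rewrite -(mulKVmx Mu v) -qnorm2_congr -mulmxA mulVmx // mulmx1 qnorm2_trmx.
Qed.

Lemma calG_qnorm2_ge0 m Th (M C : 'M[R]_m) v : 0 <= qnorm2 (calG Th M C) v.
Proof.
by rewrite qnorm2_congr; apply: invmx_qnorm2_ge0 => u; exact: gram_qnorm2_ge0.
Qed.

Lemma qnorm2D m (M : 'M[R]_m) (u u' : 'cV[R]_m) : qnorm2 M (u + u') =
  qnorm2 M u + qnorm2 M u' + (u^T *m M *m u') 0 0 + (u'^T *m M *m u) 0 0.
Proof. by rewrite /qnorm2 [(u + u')^T]raddfD !mulmxDl !mulmxDr !mxE; ring. Qed.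

Lemma qnorm2_barycentre m (M : 'M[R]_m) k (w : 'I_k -> R) (xs : 'I_k -> 'cV[R]_m)
    (y z : 'cV[R]_m) :
  (\sum_j w j) *: z = \sum_j w j *: xs j ->
  \sum_j w j * qnorm2 M (y - xs j)
  = \sum_j w j * qnorm2 M (z - xs j) + (\sum_j w j) * qnorm2 M (y - z).
Proof.
move=> zE.
have centred : \sum_j w j *: (z - xs j) = 0.
  by rewrite (eq_bigr _ (fun j _ => scalerBr _ _ _)) sumrB -scaler_suml zE subrr.
have cross (X : 'rV[R]_m) : \sum_j w j * (X *m (z - xs j)) 0 0 = 0.
  transitivity ((X *m \sum_j w j *: (z - xs j)) 0 0); last first.
    by rewrite centred mulmx0 mxE.
  by rewrite mulmx_sumr summxE; apply: eq_bigr => j _; rewrite -scalemxAr [RHS]mxE.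
under eq_bigr do rewrite -(subrKA z) addrC qnorm2D bilin_trmx !mulrDr.
by rewrite !big_split /= !cross !addr0 -mulr_suml addrC.
Qed.

End QuadraticForm.

(** * Entropy *)

Section Entropy.
Variable R : realType.

Definition xlnx (x : R) := x * ln x.

Lemma xlnx_le0 (x : R) : x <= 0 -> xlnx x = 0.
Proof. by move=> x_le0; rewrite /xlnx ln0 // mulr0. Qed.

Lemma abs_xlnx_lt (e y : R) : 0 < e -> 0 < y < expR (- (2 / e)) -> `|xlnx y| < e.
Proof.
(* With z = - ln y, |y ln y| = z / expR z < 2 / z since expR z > z^2 / 2. *)
move=> e_gt0 /andP[y_gt0 y_small]; set z := - ln y.
have z_big : 2 / e < z.
  by rewrite /z ltrNr -[X in _ < X]expRK ltr_ln ?posrE ?expR_gt0.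
have z_gt0 : 0 < z by apply: lt_trans z_big; rewrite divr_gt0.
have ez_gt2 : 2 < e * z by rewrite mulrC -ltr_pdivrMr.
have expR_z : 1 + z ^+ 2 / 2 <= expR z by have := @expR_ge1Dxn R z 1 (ltW z_gt0).
have yE : y = (expR z)^-1 by rewrite -expRN /z opprK lnK.
have -> : xlnx y = - (z / expR z) by rewrite /xlnx -[ln y]opprK -/z {1}yE mulrN mulrC.
rewrite normrN ger0_norm ?divr_ge0 ?expR_ge0 ?ltW // ltr_pdivrMr ?expR_gt0 //.
nra.
Qed.

Lemma continuous_xlnx : continuous xlnx.
Proof.
move=> x; case: (ltrgtP x 0) => [x_lt0|x_gt0|->].
- apply: (near_cst_continuous 0); near=> y; apply: xlnx_le0.
  by apply: ltW; near: y; exact: lt_nbhsl.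
- by apply: continuousM; [exact: cvg_id | exact: continuous_ln x_gt0].
- apply/cvgrPdist_lt => e e_gt0; near=> y.
  rewrite xlnx_le0 // sub0r normrN.
  have [y_le0|y_gt0] := lerP y 0; first by rewrite xlnx_le0 // normr0.
  apply: abs_xlnx_lt; rewrite // y_gt0 /=.
  by near: y; exact: lt_nbhsl (expR_gt0 _).
Unshelve. all: by end_near.
Qed.

Lemma ln_le_subr1 (x : R) : 0 < x -> ln x <= x - 1.
Proof.
by move=> x_gt0; have := @le_ln1Dx R (x - 1); rewrite [1 + _]addrC subrK; apply; lra.
Qed.

(* At p = 0 the right-hand side is s (ln 0 = 0 and 0^-1 = 0); there the
   bound needs s <= 1. *)
Lemma xlnx_perturb_le (p s : R) : 0 <= p -> 0 <= p + s <= 1 ->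
  xlnx (p + s) - xlnx p <= s * (ln p + 1) + s ^+ 2 / p.
Proof.
move=> p_ge0 /andP[ps_ge0 ps_le1]; rewrite /xlnx.
have [p0|p_neq0] := eqVneq p 0.
  move: ps_ge0 ps_le1; rewrite p0 add0r => s_ge0 s_le1.
  rewrite (ln0 (lexx 0)) invr0 !mulr0 subr0 add0r addr0 mulr1.
  by apply: (@le_trans _ _ 0) => //; rewrite mulr_ge0_le0 // ln_le0.
have p_gt0 : 0 < p by rewrite lt_def p_neq0.
set y := p + s; have -> : s = y - p by rewrite /y addrC addKr.
rewrite -subr_ge0.
have -> : (y - p) * (ln p + 1) + (y - p) ^+ 2 / p - (y * ln y - p * ln p)
    = y * (y / p - 1) - y * (ln y - ln p) by field.
rewrite subr_ge0.
have [->|y_neq0] := eqVneq y 0; first by rewrite !mul0r.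
have y_gt0 : 0 < y by rewrite lt_def y_neq0.
rewrite ler_pM2l // -ln_div ?posrE //.
by apply: ln_le_subr1; exact: divr_gt0.
Qed.
Lemma exists_xlnx_descent (D eps Q d : R) : 0 < eps -> 0 <= Q -> 0 < d ->
  exists2 t, 0 < t <= d & t * D + t ^+ 2 * Q + eps * (xlnx t - t) < 0.
Proof.
move=> eps_gt0 Q_ge0 d_gt0; set X := `|D| + Q + 1.
exists (Num.min (Num.min 1 d) (expR (- (X / eps)))); set t := Num.min _ _.
  by rewrite !lt_min ltr01 d_gt0 expR_gt0 /= !ge_min lexx !orbT.
have t_gt0 : 0 < t by rewrite !lt_min ltr01 d_gt0 expR_gt0.
have t_le1 : t <= 1 by rewrite !ge_min lexx.
have eps_ln_t : eps * ln t <= - X.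
  have -> : - X = eps * (- (X / eps)) by field; rewrite gt_eqF.
  by rewrite ler_pM2l // -[leRHS]expRK ler_ln ?posrE ?expR_gt0 // !ge_min lexx !orbT.
have -> : t * D + t ^+ 2 * Q + eps * (xlnx t - t)
    = t * (D + t * Q + eps * ln t - eps) by rewrite /xlnx; ring.
rewrite pmulr_rlt0 //.
have : t * Q <= Q by rewrite ler_piMl.
have : D <= `|D| by exact: ler_norm.
rewrite /X in eps_ln_t; lra.
Qed.

End Entropy.

Lemma linear_quadratic_ge0_eq0 (R : realFieldType) (D Q d : R) : 0 < d -> 0 <= Q ->
  (forall t, `|t| <= d -> 0 <= t * D + t ^+ 2 * Q) -> D = 0.
Proof.
move=> d_gt0 Q_ge0 ge0; apply/eqP; apply: contraT => D_neq0.
set s := Num.min d (`|D| / (Q + 1)).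
have Q1_gt0 : 0 < Q + 1 by lra.
have s_gt0 : 0 < s by rewrite lt_min d_gt0 divr_gt0 ?normr_gt0.
have s_le_d : `|s| <= d by rewrite gtr0_norm // ge_min lexx.
have sQ_lt : s * Q < `|D|.
  have : s * (Q + 1) <= `|D| by rewrite -ler_pdivlMr // ge_min lexx orbT.
  nra.
have [D_lt0|D_gt0] : D < 0 \/ 0 < D by case: ltrgtP D_neq0 => //; [left|right].
- have := ge0 s s_le_d; rewrite ltr0_norm // in sQ_lt; nra.
- have := ge0 (- s); rewrite normrN => /(_ s_le_d).
  rewrite gtr0_norm // in sQ_lt; nra.
Qed.

Lemma sumr_gt0_exists (R : realDomainType) (I : finType) (F : I -> R) :
  0 < \sum_i F i -> exists i, 0 < F i.
Proof.
move=> sum_gt0; apply: contrapT => noF.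
suff : \sum_i F i <= 0 by rewrite leNgt sum_gt0.
by apply: sumr_le0 => i _; rewrite leNgt; apply/negP => Fi; apply: noF; exists i.
Qed.

(** * Entropic optimal transport between uniform marginals *)

Section EntropicTransport.
Variables (R : realType) (N : nat) (eps : R).
Hypotheses (N_gt0 : (0 < N)%N) (eps_gt0 : 0 < eps).
Implicit Types (C : 'I_N -> 'I_N -> R) (P Q E : 'M[R]_N).

Definition coupling (P : 'M[R]_N) :=
  [/\ forall i j, 0 <= P i j, forall i, \sum_j P i j = N%:R^-1
    & forall j, \sum_i P i j = N%:R^-1].

Lemma invN_gt0 : 0 < N%:R^-1 :> R.
Proof. by rewrite invr_gt0 ltr0n. Qed.

Lemma coupling_le1 P : coupling P -> forall i j, P i j <= 1.
Proof.
case=> P_ge0 rowP _ i j; apply: (@le_trans _ _ (\sum_b P i b)).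
  by rewrite (bigD1 j) //= lerDl sumr_ge0.
by rewrite rowP invf_le1 ?ler1n ?ltr0n.
Qed.

Lemma coupling_entry01 P : coupling P -> forall a b, 0 <= P a b <= 1.
Proof. by move=> cP a b; have [P_ge0 _ _] := cP; rewrite P_ge0 coupling_le1. Qed.

Definition swap_mx (i j k l : 'I_N) : 'M[R]_N :=
  delta_mx i j - delta_mx i l - delta_mx k j + delta_mx k l.

Lemma swap_mxE i j k l a b : swap_mx i j k l a b =
  delta_mx i j a b - delta_mx i l a b - delta_mx k j a b + delta_mx k l a b.
Proof. by rewrite !mxE. Qed.

Lemma sum_delta_mx_row (i j a : 'I_N) : \sum_b (delta_mx i j a b : R) = (a == i)%:R.
Proof.
rewrite (bigD1 j) //= big1 => [|b /negbTE bj]; last by rewrite mxE bj andbF.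
by rewrite mxE eqxx andbT addr0.
Qed.

Lemma sum_delta_mx_col (i j b : 'I_N) : \sum_a (delta_mx i j a b : R) = (b == j)%:R.
Proof.
rewrite (bigD1 i) //= big1 => [|a /negbTE ai]; last by rewrite mxE ai.
by rewrite mxE eqxx addr0.
Qed.

Lemma sum_delta_mx (i j : 'I_N) (w : 'I_N -> 'I_N -> R) :
  \sum_a \sum_b delta_mx i j a b * w a b = w i j.
Proof.
rewrite (bigD1 i) //= [X in _ + X]big1 => [|a /negbTE ai]; last first.
  by rewrite big1 // => b _; rewrite mxE ai mul0r.
rewrite (bigD1 j) //= big1 => [|b /negbTE bj]; last by rewrite mxE bj andbF mul0r.
by rewrite mxE !eqxx mul1r !addr0.
Qed.

Lemma swap_mx_row i j k l a : \sum_b swap_mx i j k l a b = 0.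
Proof.
under eq_bigr do rewrite swap_mxE.
by rewrite !big_split /= !sumrN !sum_delta_mx_row; ring.
Qed.

Lemma swap_mx_col i j k l b : \sum_a swap_mx i j k l a b = 0.
Proof.
under eq_bigr do rewrite swap_mxE.
by rewrite !big_split /= !sumrN !sum_delta_mx_col; ring.
Qed.

Lemma sum_swap_mx i j k l (w : 'I_N -> 'I_N -> R) :
  \sum_a \sum_b swap_mx i j k l a b * w a b = w i j - w i l - w k j + w k l.
Proof.
under eq_bigr do under eq_bigr do rewrite swap_mxE !mulrDl !mulNr.
under eq_bigr do rewrite !big_split /= !sumrN.
by rewrite !big_split /= !sumrN !sum_delta_mx.
Qed.

Lemma delta_mx01 (i j a b : 'I_N) : 0 <= (delta_mx i j a b : R) <= 1.
Proof. by rewrite mxE ler0n lern1 leq_b1. Qed.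

Lemma abs_swap_mx_le2 i j k l a b : `|swap_mx i j k l a b| <= 2.
Proof.
rewrite swap_mxE ler_norml.
move: (delta_mx01 i j a b) (delta_mx01 i l a b).
move: (delta_mx01 k j a b) (delta_mx01 k l a b).
by move=> /andP[? ?] /andP[? ?] /andP[? ?] /andP[? ?]; apply/andP; split; lra.
Qed.

Lemma add_swap_mx_ge0 (P : 'M[R]_N) i j k l t : i != k -> j != l ->
  (forall a b, 0 <= P a b) -> 0 <= t -> t <= P i l -> t <= P k j ->
  forall a b, 0 <= P a b + t * swap_mx i j k l a b.
Proof.
move=> ik jl P_ge0 t_ge0 t_le_il t_le_kj a b; rewrite swap_mxE !mxE.
have [/andP[/eqP-> /eqP->]|not_il] := boolP ((a == i) && (b == l)).
  by rewrite !eqxx eq_sym (negbTE jl) (negbTE ik) /=; lra.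
have [/andP[/eqP-> /eqP->]|not_kj] := boolP ((a == k) && (b == j)).
  by rewrite !eqxx eq_sym (negbTE ik) (negbTE jl) andbF /=; lra.
rewrite /= !mulr0n !subr0.
by apply: addr_ge0 => //; apply: mulr_ge0 => //; apply: addr_ge0.
Qed.

Lemma coupling_perturb (P E : 'M[R]_N) t : coupling P ->
  (forall a, \sum_b E a b = 0) -> (forall b, \sum_a E a b = 0) ->
  (forall a b, 0 <= P a b + t * E a b) -> coupling (P + t *: E).
Proof.
case=> _ rowP colP rowE colE ge0; split.
- by move=> a b; rewrite !mxE.
- move=> a; under eq_bigr do rewrite !mxE.
  by rewrite big_split /= -mulr_sumr rowE mulr0 addr0 rowP.
- move=> b; under eq_bigr do rewrite !mxE.
  by rewrite big_split /= -mulr_sumr colE mulr0 addr0 colP.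
Qed.

Definition entry_cost (c p : R) := p * c + eps * xlnx p.

Definition entropic_cost (C : 'I_N -> 'I_N -> R) (P : 'M[R]_N) :=
  \sum_i \sum_j entry_cost (C i j) (P i j).

Definition entropic_slope (C : 'I_N -> 'I_N -> R) (P E : 'M[R]_N) :=
  \sum_a \sum_b E a b * (C a b + eps * (ln (P a b) + 1)).

Definition entropic_curvature (P E : 'M[R]_N) :=
  \sum_a \sum_b eps * (E a b ^+ 2 / P a b).

Lemma entry_cost_perturb_le c p s : 0 <= p -> 0 <= p + s <= 1 ->
  entry_cost c (p + s) - entry_cost c p
  <= s * (c + eps * (ln p + 1)) + eps * (s ^+ 2 / p).
Proof.
move=> p_ge0 ps01; have := xlnx_perturb_le p_ge0 ps01.
move/(ler_wpM2l (ltW eps_gt0)); rewrite /entry_cost; lra.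
Qed.

Lemma entropic_costB C P Q : entropic_cost C Q - entropic_cost C P
  = \sum_a \sum_b (entry_cost (C a b) (Q a b) - entry_cost (C a b) (P a b)).
Proof. by rewrite /entropic_cost -sumrB; apply: eq_bigr => a _; rewrite sumrB. Qed.

Lemma sum_perturb_bound C P E t :
  \sum_a \sum_b (t * E a b * (C a b + eps * (ln (P a b) + 1))
                 + eps * ((t * E a b) ^+ 2 / P a b))
  = t * entropic_slope C P E + t ^+ 2 * entropic_curvature P E.
Proof.
rewrite /entropic_slope /entropic_curvature !mulr_sumr -big_split.
apply: eq_bigr => a _; rewrite !mulr_sumr -big_split.
by apply: eq_bigr => b _ /=; rewrite exprMn; ring.
Qed.

Lemma sum2_le_entry (F G : 'I_N -> 'I_N -> R) i j :
  (forall a b, F a b <= G a b) ->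
  \sum_a \sum_b F a b <= \sum_a \sum_b G a b - G i j + F i j.
Proof.
move=> FG; rewrite !pair_bigA (bigD1 (i, j)) // [X in _ <= X - _ + _](bigD1 (i, j)) //=.
have : \sum_(p | p != (i, j)) F p.1 p.2 <= \sum_(p | p != (i, j)) G p.1 p.2.
  by apply: ler_sum => p _; exact: FG.
lra.
Qed.

Lemma entropic_cost_perturb_le C P E t :
  (forall a b, 0 <= P a b) -> (forall a b, 0 <= P a b + t * E a b <= 1) ->
  entropic_cost C (P + t *: E) - entropic_cost C P
  <= t * entropic_slope C P E + t ^+ 2 * entropic_curvature P E.
Proof.
move=> P_ge0 PE01; rewrite entropic_costB -sum_perturb_bound.
apply: ler_sum => a _; apply: ler_sum => b _; rewrite !mxE.
exact: entry_cost_perturb_le (P_ge0 a b) (PE01 a b).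
Qed.

Lemma entropic_cost_perturb_zero_le C P E t i j :
  (forall a b, 0 <= P a b) -> (forall a b, 0 <= P a b + t * E a b <= 1) ->
  P i j = 0 -> E i j = 1 ->
  entropic_cost C (P + t *: E) - entropic_cost C P
  <= t * entropic_slope C P E + t ^+ 2 * entropic_curvature P E
     + eps * (xlnx t - t).
Proof.
move=> P_ge0 PE01 Pij Eij; rewrite entropic_costB -sum_perturb_bound.
apply: le_trans (sum2_le_entry i j _) _ => [a b|].
  by rewrite !mxE; exact: entry_cost_perturb_le (P_ge0 a b) (PE01 a b).
rewrite !mxE Pij Eij /entry_cost (xlnx_le0 (lexx 0)) (ln0 (lexx 0)) invr0.
by rewrite !mulr0 mulr1 !add0r; lra.
Qed.

Lemma entropic_curvature_ge0 P E : (forall a b, 0 <= P a b) ->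
  0 <= entropic_curvature P E.
Proof.
move=> P_ge0; apply: sumr_ge0 => a _; apply: sumr_ge0 => b _.
by rewrite mulr_ge0 ?divr_ge0 ?sqr_ge0 // ltW.
Qed.

Section Argmin.
Variables (C : 'I_N -> 'I_N -> R) (P : 'M[R]_N).
Hypotheses (cP : coupling P)
  (P_min : forall Q, coupling Q -> entropic_cost C P <= entropic_cost C Q).

(* If P i j = 0, shifting mass t around a cycle through the positive
   entries P i l and P k j gains eps t ln t, which beats the O(t) change of
   the rest of the cost. *)
Lemma entropic_argmin_gt0 i j : 0 < P i j.
Proof.
have [P_ge0 rowP colP] := cP.
rewrite lt_def P_ge0 andbT; apply/negP => /eqP Pij.
have [l Pil] : exists l, 0 < P i l by apply: sumr_gt0_exists; rewrite rowP invN_gt0.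
have [k Pkj] : exists k, 0 < P k j by apply: sumr_gt0_exists; rewrite colP invN_gt0.
have ik : i != k by apply: contraTneq Pkj => <-; rewrite Pij ltxx.
have jl : j != l by apply: contraTneq Pil => <-; rewrite Pij ltxx.
set E := swap_mx i j k l.
have d_gt0 : 0 < Num.min (P i l) (P k j) by rewrite lt_min Pil Pkj.
have [t /andP[t_gt0 t_le] descent] := exists_xlnx_descent (entropic_slope C P E)
  eps_gt0 (entropic_curvature_ge0 E P_ge0) d_gt0.
move: t_le; rewrite le_min => /andP[t_le_il t_le_kj].
have cPE : coupling (P + t *: E).
  apply: coupling_perturb => //; [exact: swap_mx_row | exact: swap_mx_col|].
  exact: add_swap_mx_ge0 ik jl P_ge0 (ltW t_gt0) t_le_il t_le_kj.
have PE01 a b : 0 <= P a b + t * E a b <= 1.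
  by have := coupling_entry01 cPE a b; rewrite !mxE.
have Eij : E i j = 1.
  by rewrite swap_mxE !mxE !eqxx (negbTE jl) (negbTE ik) /= !mulr0n !subr0 addr0.
have := entropic_cost_perturb_zero_le C P_ge0 PE01 Pij Eij.
have := P_min cPE; rewrite -subr_ge0 => /le_trans/[apply].
by rewrite leNgt descent.
Qed.

Lemma entropic_argmin_stationary i j k l :
  C i j + eps * ln (P i j) + (C k l + eps * ln (P k l))
  = C i l + eps * ln (P i l) + (C k j + eps * ln (P k j)).
Proof.
have [P_ge0 _ _] := cP; have P_gt0 := entropic_argmin_gt0.
suff : entropic_slope C P (swap_mx i j k l) = 0.
  by rewrite /entropic_slope sum_swap_mx; lra.
(* S^-1 bounds all entries of P from below, so the cycle perturbations
   P + t E with |t| <= S^-1 / 2 remain couplings. *)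
set S := \sum_a \sum_b (P a b)^-1.
have invP_le a b : (P a b)^-1 <= S.
  rewrite /S (bigD1 a) //= (bigD1 b) //= -addrA lerDl.
  by apply: addr_ge0; apply: sumr_ge0 => *; [|apply: sumr_ge0 => *];
    rewrite invr_ge0 P_ge0.
have S_gt0 : 0 < S by apply: lt_le_trans (invP_le i j); rewrite invr_gt0.
have P_lb a b : S^-1 <= P a b.
  by rewrite -[P a b]invrK lef_pV2 ?posrE ?invr_gt0.
set E := swap_mx i j k l.
apply: (linear_quadratic_ge0_eq0 (d := S^-1 / 2) _ (entropic_curvature_ge0 E P_ge0)).
  by rewrite divr_gt0 ?invr_gt0.
move=> t t_le.
have PE_ge0 a b : 0 <= P a b + t * E a b.
  have : `|t * E a b| <= S^-1.
    rewrite normrM -[leRHS](divfK (_ : 2 != 0)) ?pnatr_eq0 //.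
    exact: ler_pM t_le (abs_swap_mx_le2 i j k l a b).
  rewrite ler_norml => /andP[lb _]; have := P_lb a b; lra.
have cPE : coupling (P + t *: E).
  by apply: coupling_perturb => //; [exact: swap_mx_row | exact: swap_mx_col].
have PE01 a b : 0 <= P a b + t * E a b <= 1.
  by have := coupling_entry01 cPE a b; rewrite !mxE.
apply: le_trans (entropic_cost_perturb_le C P_ge0 PE01).
by rewrite subr_ge0; exact: P_min.
Qed.

Lemma entropic_argmin_scaling : exists u beta : 'I_N -> R,
  [/\ forall i, 0 < u i, forall j, 0 < beta j
    & forall i j, P i j = u i * expR (- (C i j / eps)) * beta j].
Proof.
pose i0 : 'I_N := Ordinal N_gt0.
(* Stationarity makes rho additively separable:
   rho i j = rho i i0 + rho i0 j - rho i0 i0. *)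
pose rho a b := C a b / eps + ln (P a b).
exists (fun i => expR (rho i i0 - rho i0 i0)), (fun j => expR (rho i0 j)).
split=> [i|j|i j]; rewrite ?expR_gt0 //.
rewrite -!expRD -[LHS]lnK ?posrE ?entropic_argmin_gt0 //; congr expR.
have eps_neq0 : eps != 0 by rewrite gt_eqF.
apply: (mulfI eps_neq0).
rewrite /rho !mulrDr !mulrN !mulrDr !(mulrC eps (_ / eps)) !divfK //.
have := entropic_argmin_stationary i j i0 i0; lra.
Qed.

End Argmin.
End EntropicTransport.

Local Open Scope classical_set_scope.

(** * Existence of a minimiser *)

Section MatrixTopology.
Variable R : realType.

Lemma continuous_sum (T : topologicalType) (V : normedModType R) (I : Type)
    (r : seq I) (F : I -> T -> V) :
  (forall i, continuous (F i)) -> continuous (fun t => \sum_(i <- r) F i t).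
Proof.
move=> F_cont; elim: r => [|i r IHr].
  by under eq_fun do rewrite big_nil; exact: cst_continuous.
by under eq_fun do rewrite big_cons; move=> t; exact: cvgD (F_cont i t) (IHr t).
Qed.

Lemma continuous_qnorm2 m (M : 'M[R]_m) : continuous (qnorm2 M).
Proof.
rewrite (_ : qnorm2 M = fun v => \sum_a \sum_b v a 0 * M a b * v b 0).
  apply: continuous_sum => a; apply: continuous_sum => b v.
  exact: cvgM (cvgM (@coord_continuous _ _ _ a 0 v) (cvg_cst _))
    (@coord_continuous _ _ _ b 0 v).
by apply/funext => v; rewrite qnorm2E.
Qed.

Lemma continuous_mx_entries (T : topologicalType) m n (f : T -> 'M[R]_(m, n)) :
  (forall i j, continuous (fun t => f t i j)) -> continuous f.
Proof.
move=> f_cont t A [/= U U_nbhs UA]; apply: filterS (fun s Us => UA _ Us) _.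
apply: filter_forall => i; apply: filter_forall => j.
exact: f_cont i j t _ (U_nbhs i j).
Qed.

Lemma continuous_vec_mx m n : continuous (@vec_mx R m n).
Proof.
apply: continuous_mx_entries => i j.
under eq_fun do rewrite mxE; exact: coord_continuous.
Qed.

Lemma mx_box_compact m n (a b : R) :
  compact [set M : 'M[R]_(m, n) | forall i j, a <= M i j <= b].
Proof.
have -> : [set M : 'M[R]_(m, n) | forall i j, a <= M i j <= b]
    = vec_mx @` [set v : 'rV[R]_(m * n) | forall k, `[a, b]%classic (v ord0 k)].
  apply/seteqP; split=> [M M_box|_ [v v_box <-] i j].
    exists (mxvec M); last exact: mxvecK.
    by move=> k; case/mxvec_indexP: k => i j; rewrite mxvecE /= in_itv /= M_box.
  by have := v_box (mxvec_index i j); rewrite mxE /= in_itv.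
apply: continuous_compact; first exact: continuous_subspaceT (@continuous_vec_mx _ _).
exact: (@rV_compact R (m * n) (fun _ => `[a, b]%classic)
  (fun _ => @segment_compact R a b)).
Qed.

End MatrixTopology.

Lemma closed_forall (T : topologicalType) (I : Type) (F : I -> set T) :
  (forall i, closed (F i)) -> closed [set t | forall i, F i t].
Proof.
move=> F_closed; rewrite (_ : [set t | _] = \bigcap_(i in setT) F i).
  by apply: closed_bigI => i _; exact: F_closed.
by apply/seteqP; split=> [t Ft i _|t Ft i]; exact: Ft.
Qed.

Lemma closed_preimage (T U : topologicalType) (f : T -> U) (D : set U) :
  continuous f -> closed D -> closed [set t | D (f t)].
Proof. by move=> f_cont; apply: preimage_closed => t _; exact: f_cont. Qed.

Section CouplingSet.
Variables (R : realType) (N : nat).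
Hypothesis N_gt0 : (0 < N)%N.

Lemma coupling_closed : closed [set P : 'M[R]_N | coupling P].
Proof.
rewrite (_ : [set P | coupling P] = [set P | forall i j, 0 <= P i j]
    `&` ([set P | forall i, \sum_j P i j = N%:R^-1]
    `&` [set P | forall j, \sum_i P i j = N%:R^-1])); last first.
  by apply/seteqP; split=> P; [case=> ? ? ?; split; [|split] | case=> ? [? ?]].
have row_cont i : continuous (fun P : 'M[R]_N => \sum_j P i j).
  by apply: continuous_sum => j P; exact: coord_continuous.
have col_cont j : continuous (fun P : 'M[R]_N => \sum_i P i j).
  by apply: continuous_sum => i P; exact: coord_continuous.
apply: closedI; [|apply: closedI].
- apply: closed_forall => i; apply: closed_forall => j.
  exact: closed_preimage (@coord_continuous _ _ _ i j) (@closed_ge R 0).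
- apply: closed_forall => i; exact: closed_preimage (row_cont i) (@closed_eq R _).
- apply: closed_forall => j; exact: closed_preimage (col_cont j) (@closed_eq R _).
Qed.

Lemma coupling_compact : compact [set P : 'M[R]_N | coupling P].
Proof.
apply: subclosed_compact coupling_closed (@mx_box_compact R N N 0 1) _.
exact: coupling_entry01.
Qed.

Lemma coupling_uniform : coupling (const_mx (N%:R^-1 / N%:R) : 'M[R]_N).
Proof.
have sum_uniform : \sum_(k < N) (N%:R^-1 / N%:R : R) = N%:R^-1.
  by rewrite sumr_const card_ord -[_ *+ N]mulr_natr divfK // pnatr_eq0 -lt0n.
split=> [i j|i|j]; first by rewrite mxE divr_ge0 ?invr_ge0.
  all: by under eq_bigr do rewrite mxE.
Qed.

End CouplingSet.

(** * The closed loop *)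

Section ClosedLoop.
Variables (R : realType) (N n Th : nat) (eps : R) (A B : 'I_N -> 'M[R]_n)
  (xd : 'I_N -> 'cV[R]_n).
Hypotheses (N_gt0 : (0 < N)%N) (eps_gt0 : 0 < eps).
Implicit Types (P : 'M[R]_N) (x : 'I_N -> 'cV[R]_n) (u beta : 'I_N -> R).

Definition target (P : 'M[R]_N) (i : 'I_N) : 'cV[R]_n :=
  N%:R *: \sum_j P i j *: xd j.

Definition tracking_cost (x : 'I_N -> 'cV[R]_n) (i j : 'I_N) :=
  qnorm2 (calG Th (A i) (B i)) (x i - xd j).

Definition target_objective (P : 'M[R]_N) :=
  entropic_cost eps (tracking_cost (target P)) P.

Lemma entropic_cost_target_le P x : coupling P ->
  target_objective P <= entropic_cost eps (tracking_cost x) P.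
Proof.
case=> _ rowP _; rewrite -subr_ge0 -sumrB; apply: sumr_ge0 => i _.
have -> : \sum_j entry_cost eps (tracking_cost x i j) (P i j)
          - \sum_j entry_cost eps (tracking_cost (target P) i j) (P i j)
    = \sum_j P i j * tracking_cost x i j
      - \sum_j P i j * tracking_cost (target P) i j.
  by rewrite -!sumrB; apply: eq_bigr => j _; rewrite /entry_cost; ring.
rewrite /tracking_cost (@qnorm2_barycentre _ _ _ _ _ _ _ (target P i)); last first.
  by rewrite rowP /target scalerA mulVf ?scale1r // pnatr_eq0 -lt0n.
rewrite addrAC subrr add0r rowP mulr_ge0 ?invr_ge0 //.
exact: calG_qnorm2_ge0.
Qed.

Lemma continuous_target_objective : continuous target_objective.
Proof.
rewrite /target_objective /entropic_cost /entry_cost /tracking_cost.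
apply: continuous_sum => i; apply: continuous_sum => j P.
have entry_cont := @coord_continuous _ _ _ i j P.
have mean_cont : continuous (fun Q : 'M[R]_N => \sum_k Q i k *: xd k).
  apply: continuous_sum => k Q.
  exact: cvgZ (@coord_continuous _ _ _ i k Q) (cvg_cst _).
have target_cont : continuous (fun Q => target Q i - xd j).
  by move=> Q; exact: cvgB (cvgZ (cvg_cst _) (mean_cont Q)) (cvg_cst _).
exact: cvgD
  (cvgM entry_cont (continuous_comp (target_cont P) (@continuous_qnorm2 _ _ _ _)))
  (cvgM (cvg_cst _) (continuous_comp entry_cont (@continuous_xlnx _ _))).
Qed.

Lemma Ptilde_scaling x P u beta : (forall i, \sum_j P i j = N%:R^-1) ->
  (forall i, 0 < u i) ->
  (forall i j, P i j = u i * Kmat Th eps A B xd x i j * beta j) ->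
  forall i j, Ptilde Th eps A B xd x beta i j = P i j.
Proof.
move=> rowP u_gt0 PE i j; have u_neq0 : u i != 0 := lt0r_neq0 (u_gt0 i).
have uvecE : uvec Th eps A B xd x beta i = u i.
  have KbE : \sum_(j < N) Kmat Th eps A B xd x i j * beta j = N%:R^-1 / u i.
    rewrite -(rowP i) mulr_suml; apply: eq_bigr => b _.
    by rewrite PE; field.
  by rewrite /uvec KbE; field; rewrite u_neq0 pnatr_eq0 -lt0n.
by rewrite /Ptilde uvecE PE.
Qed.

Lemma f1_target x beta P : (forall i j, Ptilde Th eps A B xd x beta i j = P i j) ->
  x = target P -> f1 Th eps A B xd x beta = x.
Proof.
move=> PtE xE; apply/funext => i; rewrite /f1.
under eq_bigr do rewrite PtE.
by rewrite -/(target P i) -xE mulmxDl mulNmx mul1mx addrC subrK.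
Qed.

Lemma f2_fixed x beta P : (forall j, \sum_i P i j = N%:R^-1) ->
  (forall j, 0 < beta j) -> (forall i j, Ptilde Th eps A B xd x beta i j = P i j) ->
  f1 Th eps A B xd x beta = x -> forall j, f2 Th eps A B xd x beta j = beta j.
Proof.
move=> colP beta_gt0 PtE f1x j; rewrite /f2 f1x.
have -> : \sum_i Kmat Th eps A B xd x i j * uvec Th eps A B xd x beta i
    = (\sum_i P i j) / beta j.
  rewrite mulr_suml; apply: eq_bigr => i _; rewrite -PtE /Ptilde.
  by field; exact: lt0r_neq0.
by rewrite colP; field; rewrite lt0r_neq0 // pnatr_eq0 -lt0n.
Qed.

End ClosedLoop.

Local Close Scope classical_set_scope.

Unset Implicit Arguments.

Theorem proposition2 (R : realType) (N n Th : nat) (eps : R)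
  (A B : 'I_N -> 'M[R]_n) (xd : 'I_N -> 'cV[R]_n) :
  (0 < N)%N -> (0 < n)%N -> (0 < Th)%N -> 0 < eps ->
  (forall i, B i \in unitmx) ->
  exists (xe : 'I_N -> 'cV[R]_n) (be : 'I_N -> R),
    (forall j, 0 < be j) /\
    f1 Th eps A B xd xe be = xe /\
    exists r : R, 0 < r /\ forall j, f2 Th eps A B xd xe be j = r * be j.
Proof.
move=> N_gt0 _ _ eps_gt0 _.
have [P /[!inE] cP P_min] := compact_EVT_min
  (ex_intro _ _ (@coupling_uniform R N N_gt0)) (@coupling_compact R N N_gt0)
  (continuous_subspaceT (@continuous_target_objective R N n Th eps A B xd)).
set x := target xd P.
have x_min Q : coupling Q -> entropic_cost eps (tracking_cost Th A B xd x) P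
                             <= entropic_cost eps (tracking_cost Th A B xd x) Q.
  move=> cQ; apply: le_trans (P_min Q _) _; first by rewrite inE.
  exact: entropic_cost_target_le.
have [u [beta [u_gt0 beta_gt0 PE]]] := entropic_argmin_scaling N_gt0 eps_gt0 cP x_min.
have [_ rowP colP] := cP.
have PtE := Ptilde_scaling N_gt0 rowP u_gt0 PE.
have f1x := f1_target PtE (erefl x).
exists x, beta; split=> //; split=> //; exists 1; split=> // j.
by rewrite mul1r; exact: (f2_fixed (x := x) N_gt0 colP beta_gt0 PtE f1x).
Qed.
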